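(* Let $f^*:\{\pm1\}^d\to\mathbb R$. Then $f^*$ satisfies the stable merged-staircase property if and only if it satisfies the sufficient impurity decrease condition for some $\lambda>0$, namely: for every cell $C$ with $\operatorname{Var}\{f^*(\mathbf X)\mid\mathbf X\in C\}>0$, $\max_{k\in[d]\setminus J(C)}\operatorname{Corr}^2\{f^*(\mathbf X),X_k\mid\mathbf X\in C\}\ge\lambda$, where $\mathbf X$ is uniform on $\{\pm1\}^d$.
   Context: $\chi_S(\mathbf x)=\prod_{j\in S}x_j$. Every $f:\{\pm1\}^m\to\mathbb R$ has a unique expansion $f=\sum_S\beta_S\chi_S$; $f$ satisfies MSP if the sets $S$ with $\beta_S\ne0$ can be ordered $S_1,\dots,S_r$ with $|S_i\setminus\bigcup_{j<i}S_j|\le1$ for all $i$. A cell is $C=\{\mathbf x\in\{\pm1\}^d:x_j=z_j,\ j\in J(C)\}$ for some $J(C)\subset[d]$ and signs $z_j$; $f^*|_C$ is the restriction viewed as a function of $x_j$, $j\notin J(C)$. $f^*$ satisfies the stable merged-staircase property if $f^*|_C$ satisfies MSP for every cell $C$. *)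

From mathcomp Require Import all_boot all_order all_algebra.
From mathcomp Require Import reals.
Set Implicit Arguments. Unset Strict Implicit. Unset Printing Implicit Defensive.
Import Order.TTheory GRing.Theory Num.Theory.
Local Open Scope ring_scope.

(* Points of {±1}^d are encoded as x : {ffun 'I_d -> bool};
   the coordinate value of x at j is spin (x j) (true |-> 1, false |-> -1). *)
Definition spin {R : realType} (b : bool) : R := if b then 1 else -1.

Section Defs.
Variables (R : realType) (d : nat).
Notation pt := {ffun 'I_d -> bool}.

Definition chi (S : {set 'I_d}) (x : pt) : R := \prod_(j in S) spin (x j).

Definition cell (J : {set 'I_d}) (z : pt) : {set pt} :=
  [set x : pt | [forall j in J, x j == z j]].

Definition msp_support (supp : {set 'I_d} -> bool) : Prop :=
  exists s : seq {set 'I_d},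
    [/\ uniq s, (forall S, (S \in s) = supp S) &
        forall i, (i < size s)%N ->
          (#|nth set0 s i :\: \bigcup_(k < i) nth set0 s k| <= 1)%N].

(* f restricted to cell(J,z), viewed as a function of x_j, j notin J,
   satisfies MSP: its (unique) Fourier expansion in the free coordinates
   f|_C = sum_{S subset [d]\J} beta_S chi_S has merged-staircase support. *)
Definition msp_on_cell (f : pt -> R) (J : {set 'I_d}) (z : pt) : Prop :=
  exists beta : {set 'I_d} -> R,
    [/\ (forall S, beta S != 0 -> S \subset ~: J),
        (forall x, x \in cell J z ->
           f x = \sum_(S : {set 'I_d} | S \subset ~: J) beta S * chi S x) &
        msp_support (fun S => beta S != 0)].

Definition stable_msp (f : pt -> R) : Prop :=
  forall (J : {set 'I_d}) (z : pt), msp_on_cell f J z.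

(* conditional expectation given X in C, X uniform on {±1}^d *)
Definition cmean (C : {set pt}) (g : pt -> R) : R :=
  (\sum_(x in C) g x) / (#|C|%:R).

Definition cvar (C : {set pt}) (g : pt -> R) : R :=
  cmean C (fun x => (g x - cmean C g) ^+ 2).

Definition ccov (C : {set pt}) (g h : pt -> R) : R :=
  cmean C (fun x => (g x - cmean C g) * (h x - cmean C h)).

Definition ccorr2 (C : {set pt}) (g h : pt -> R) : R :=
  ccov C g h ^+ 2 / (cvar C g * cvar C h).

Definition coord (k : 'I_d) (x : pt) : R := spin (x k).

Definition SID (f : pt -> R) (lambda : R) : Prop :=
  forall (J : {set 'I_d}) (z : pt),
    0 < cvar (cell J z) f ->
    exists2 k : 'I_d, k \notin J &
      lambda <= ccorr2 (cell J z) f (coord k).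

End Defs.

From Pilot Require Import Defs.
From mathcomp Require Import all_boot all_order all_algebra.
From mathcomp Require Import reals.
From mathcomp Require Import lra.
Set Implicit Arguments. Unset Strict Implicit. Unset Printing Implicit Defensive.
Import Order.TTheory GRing.Theory Num.Theory.
Local Open Scope ring_scope.

(* Fix a cell C = cell J z and write f = sum_{S in [d] \ J} beta_S chi_S on C.  On a subcell
   C' of C fixing also the coordinates in U through the point w, a free coordinate x_k
   (k notin J u U) has variance 1 and Cov(f, x_k | C') = sum beta_S chi_{S \ k}(w) over the
   S with S \ U = {k}.
   If f|_C has MSP and is not constant, the first nonempty set of its staircase is a
   singleton {k}, so Corr^2(f, x_k | C) = beta_{k}^2 / Var(f | C) > 0; there are finitely
   many triples (J, z, k), so these correlations have a positive lower bound lambda.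
   Conversely, under SID, if no S in the support of beta has |S \ U| = 1, then f is
   uncorrelated with every free coordinate on each subcell fixing J u U, hence constant
   there; so f is invariant on C under flipping any coordinate outside J u U, and
   beta_S = 0 whenever S is not contained in U.  Hence the support can always be extended
   by a set with at most one new coordinate, and a staircase ordering is built greedily. *)

Section Staircase.
Variable d : nat.
Implicit Types (s : seq {set 'I_d}) (S U : {set 'I_d}).

Definition staircase s := forall i, (i < size s)%N ->
  (#|nth set0 s i :\: \bigcup_(k < i) nth set0 s k| <= 1)%N.

Local Notation cover s := (\bigcup_(k < size s) nth set0 s k).

Lemma sub_cover s S : S \in s -> S \subset cover s.
Proof. by move/(nthP set0) => [i lt_i_s <-]; exact: (bigcup_sup (Ordinal lt_i_s)). Qed.

Lemma staircase_rcons s S :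
  staircase s -> (#|S :\: cover s| <= 1)%N -> staircase (rcons s S).
Proof.
move=> stair_s new_S i; rewrite size_rcons ltnS => le_i_s.
have -> : \bigcup_(k < i) nth set0 (rcons s S) k = \bigcup_(k < i) nth set0 s k.
  by apply: eq_bigr => k _; rewrite nth_rcons (leq_trans (ltn_ord k) le_i_s).
rewrite nth_rcons; case: ltnP => [|ge_i_s]; first exact: stair_s.
have -> : i = size s by apply/eqP; rewrite eqn_leq le_i_s ge_i_s.
by rewrite eqxx.
Qed.

Lemma staircase_first_singleton s : staircase s ->
  has (predC1 set0) s -> exists k, [set k] \in s.
Proof.
move=> stair_s has_s; set i := find (predC1 set0) s.
have lt_i_s : (i < size s)%N by rewrite -has_find.
have nz_i : nth set0 s i != set0 := nth_find set0 has_s.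
have cover0 : \bigcup_(k < i) nth set0 s k = set0.
  by apply: big1 => k _; apply/eqP/negbFE/(before_find set0 (ltn_ord k)).
have := stair_s i lt_i_s; rewrite cover0 setD0 => le_card1.
have /cards1P[k def_k] : #|nth set0 s i| == 1%N by rewrite eqn_leq le_card1 card_gt0.
by exists k; rewrite -def_k mem_nth.
Qed.

Variable P : pred {set 'I_d}.
Hypothesis P_extendable : forall U, (exists S, P S && ~~ (S \subset U)) ->
  exists S, P S && (#|S :\: U| == 1)%N.

Lemma staircase_step s : (exists S0, P S0 && (S0 \notin s)) ->
  exists S, [&& P S, S \notin s & (#|S :\: cover s| <= 1)%N].
Proof.
move=> [S0 /andP[P_S0 S0_notin_s]].
have [/existsP[S escapes_S] | covered] :=
  boolP [exists S, P S && ~~ (S \subset cover s)].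
  have [S' /andP[P_S' /eqP card_S']] := P_extendable (ex_intro _ S escapes_S).
  exists S'; rewrite P_S' card_S' leqnn andbT /=.
  apply: contraTN isT => /sub_cover; rewrite -setD_eq0 => /eqP S'_empty.
  by move: card_S'; rewrite S'_empty cards0.
exists S0; rewrite P_S0 S0_notin_s /=.
have : S0 \subset cover s.
  by apply: contraR covered => h; apply/existsP; exists S0; rewrite P_S0 h.
by rewrite -setD_eq0 => /eqP ->; rewrite cards0.
Qed.

Lemma staircase_completion n s : (#|[set S | P S & S \notin s]| <= n)%N ->
  uniq s -> all P s -> staircase s -> msp_support P.
Proof.
elim: n s => [|n IH] s missing_s uniq_s all_P stair_s.
  exists s; split => // S; apply/idP/idP => [/(allP all_P) //|P_S].
  apply: contraLR missing_s => S_notin_s; rewrite -ltnNge card_gt0.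
  by apply/set0Pn; exists S; rewrite inE P_S S_notin_s.
have [/existsP missing | complete] := boolP [exists S, P S && (S \notin s)]; last first.
  exists s; split => // S; apply/idP/idP => [/(allP all_P) //|P_S].
  by apply: contraR complete => S_notin_s; apply/existsP; exists S; rewrite P_S S_notin_s.
have [S /and3P[P_S S_notin_s new_S]] := staircase_step missing.
apply: (IH (rcons s S)); last 3 first.
- by rewrite rcons_uniq S_notin_s uniq_s.
- by rewrite all_rcons P_S all_P.
- exact: staircase_rcons.
rewrite -ltnS; apply: leq_trans missing_s; apply: proper_card.
rewrite properE; apply/andP; split.
  by apply/subsetP => T; rewrite !inE mem_rcons in_cons negb_or => /andP[-> /andP[_ ->]].
apply/subsetPn; exists S; first by rewrite inE P_S S_notin_s.
by rewrite inE mem_rcons mem_head andbF.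
Qed.

Lemma msp_support_of_extendable : msp_support P.
Proof. exact: (@staircase_completion _ [::]). Qed.

End Staircase.

Lemma spinN (R : realType) b : spin (~~ b) = - spin b :> R.
Proof. by case: b; rewrite /spin ?opprK. Qed.

Lemma spin_mul_self (R : realType) b : spin b * spin b = 1 :> R.
Proof. by case: b; rewrite /spin ?mulrNN mulr1. Qed.

Lemma sum_prod_subset (R : comNzRingType) (I : finType) (K : {set I}) (a : I -> R) :
  \sum_(S : {set I} | S \subset K) \prod_(j in S) a j = \prod_(j in K) (1 + a j).
Proof.
have -> : \prod_(j in K) (1 + a j) = \prod_j ((if j \in K then a j else 0) + 1).
  by rewrite big_mkcond; apply: eq_bigr => j _; case: ifP => _; rewrite ?add0r // addrC.
rewrite bigA_distr big_mkcond /=; apply: eq_big => // S _.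
case: ifPn => [S_sub_K | /subsetPn[j j_in_S j_notin_K]].
  by rewrite big_mkcond; apply: eq_bigr => j _; case: ifP => // /(subsetP S_sub_K) ->.
by rewrite (bigD1 j) //= j_in_S (negbTE j_notin_K) mul0r.
Qed.

Section Cells.
Variables (R : realType) (d : nat).
Local Notation pt := {ffun 'I_d -> bool}.
Local Notation chi := (@chi R d).
Local Notation coord := (@Pilot.Defs.coord R d).
Implicit Types (J U V S : {set 'I_d}) (w x y z : pt) (k : 'I_d) (C : {set pt}).

Definition flip k x : pt := [ffun j => if j == k then ~~ x j else x j].

Lemma flipK k : involutive (flip k).
Proof.
by move=> x; apply/ffunP => j; rewrite !ffunE; case: eqP => // _; rewrite negbK.
Qed.

Lemma mem_flip_cell J z k x : k \notin J -> (flip k x \in cell J z) = (x \in cell J z).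
Proof.
move=> k_notin_J; rewrite !inE; apply: eq_forallb => j; rewrite ffunE.
by case: (eqVneq j k) => [->|//]; rewrite (negbTE k_notin_J).
Qed.

Lemma cell_center J z : z \in cell J z.
Proof. by rewrite inE; apply/forallP => j; apply/implyP. Qed.

Lemma cell_card_gt0 J z : (0 < #|cell J z|)%N.
Proof. by apply/card_gt0P; exists z; exact: cell_center. Qed.

Lemma cell_subset J U z w : w \in cell J z -> cell (J :|: U) w \subset cell J z.
Proof.
rewrite inE => /forallP w_in; apply/subsetP => x; rewrite !inE => /forallP x_in.
apply/forallP => j; apply/implyP => j_in_J.
by have := x_in j; rewrite inE j_in_J => /eqP ->; have := w_in j; rewrite j_in_J.
Qed.

Lemma sum_cell_odd J z k (g : pt -> R) : k \notin J ->
  {in cell J z, forall x, g (flip k x) = - g x} -> \sum_(x in cell J z) g x = 0.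
Proof.
move=> k_notin_J g_odd.
have : \sum_(x in cell J z) g x = \sum_(x in cell J z) g (flip k x).
  rewrite (reindex_inj (can_inj (flipK k))) /=.
  by apply: eq_bigl => x; rewrite mem_flip_cell.
rewrite (eq_bigr _ g_odd) sumrN; lra.
Qed.

Lemma chi0 x : chi set0 x = 1.
Proof. by rewrite /chi big_set0. Qed.

Lemma chi_flip V k x : k \in V -> chi V (flip k x) = - chi V x.
Proof.
move=> k_in_V; rewrite /chi !(bigD1 k k_in_V) /= ffunE eqxx spinN mulNr.
congr (- (_ * _)); apply: eq_bigr => j /andP[_ j_neq_k].
by rewrite ffunE (negbTE j_neq_k).
Qed.

Lemma chi_mul_coord S k x :
  chi S x * coord k x = chi (if k \in S then S :\ k else k |: S) x.
Proof.
rewrite /Pilot.Defs.coord; case: ifP => k_in_S.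
  rewrite /chi (bigD1 k k_in_S) /= mulrC mulrA spin_mul_self mul1r.
  by apply: eq_bigl => j; rewrite in_setD1 andbC.
by rewrite /chi big_setU1 ?k_in_S //= mulrC.
Qed.

Lemma sum_chi_cell J z V : \sum_(x in cell J z) chi V x =
  if V \subset J then #|cell J z|%:R * chi V z else 0.
Proof.
case: ifPn => [V_sub_J | /subsetPn[k k_in_V k_notin_J]]; last first.
  by apply: (sum_cell_odd k_notin_J) => x _; rewrite chi_flip.
rewrite mulr_natl -sumr_const; apply: eq_bigr => x; rewrite inE => /forallP x_in.
apply: eq_bigr => j j_in_V.
by have := x_in j; rewrite (subsetP V_sub_J j j_in_V) => /eqP ->.
Qed.

Lemma sum_coord_cell J z k : k \notin J -> \sum_(x in cell J z) coord k x = 0.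
Proof.
move=> k_notin_J; transitivity (\sum_(x in cell J z) chi [set k] x).
  by apply: eq_bigr => x _; rewrite /chi big_set1.
by rewrite sum_chi_cell sub1set (negbTE k_notin_J).
Qed.

Lemma ccov_coord J z k (g : pt -> R) : k \notin J ->
  ccov (cell J z) g (coord k) = cmean (cell J z) (fun x => g x * coord k x).
Proof.
move=> k_notin_J; rewrite /ccov /cmean sum_coord_cell // mul0r.
under eq_bigr do rewrite subr0 mulrBl.
by rewrite sumrB -mulr_sumr sum_coord_cell // mulr0 subr0.
Qed.

Lemma cvar_coord J z k : k \notin J -> cvar (cell J z) (coord k) = 1.
Proof.
move=> k_notin_J; rewrite /cvar /cmean sum_coord_cell // mul0r.
under eq_bigr do rewrite subr0 expr2 spin_mul_self.
by rewrite sumr_const mulfV // pnatr_eq0 -lt0n cell_card_gt0.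
Qed.

Lemma cvar_ge0 C (g : pt -> R) : 0 <= cvar C g.
Proof. by apply: divr_ge0 => //; apply: sumr_ge0 => x _; exact: sqr_ge0. Qed.

Lemma cvar_const C (g : pt -> R) c : {in C, forall x, g x = c} -> cvar C g = 0.
Proof.
move=> g_const; have [C0 | C_gt0] := posnP #|C|; first by rewrite /cvar /cmean C0 invr0 mulr0.
have mean_c : cmean C g = c.
  rewrite /cmean (eq_bigr _ g_const) sumr_const -[c *+ _]mulr_natr.
  by rewrite mulfK // pnatr_eq0 -lt0n.
rewrite /cvar mean_c /cmean big1 ?mul0r // => x /g_const ->.
by rewrite subrr expr0n.
Qed.

Lemma cvar_le0_const C (g : pt -> R) : cvar C g <= 0 -> {in C &, forall x y, g x = g y}.
Proof.
move=> var_le0 x y x_in_C y_in_C.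
have C_gt0 : (0 < #|C|)%N by apply/card_gt0P; exists x.
have : \sum_(x in C) (g x - cmean C g) ^+ 2 = 0.
  have /eqP : cvar C g = 0 by apply/eqP; rewrite eq_le var_le0 cvar_ge0.
  by rewrite mulf_eq0 invr_eq0 pnatr_eq0 (gtn_eqF C_gt0) orbF => /eqP.
move/(psumr_eq0P (fun i _ => sqr_ge0 (g i - cmean C g))) => dev0.
have /eqP := dev0 x x_in_C; have /eqP := dev0 y y_in_C.
by rewrite !sqrf_eq0 !subr_eq0 => /eqP -> /eqP.
Qed.

Lemma sum_chi_mul_chi J z x y : x \in cell J z -> y \in cell J z ->
  \sum_(S : {set 'I_d} | S \subset ~: J) chi S y * chi S x =
  if y == x then 2 ^+ #|~: J| else 0.
Proof.
move=> x_in y_in; under eq_bigr do rewrite -big_split /=.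
rewrite sum_prod_subset; case: eqVneq => [-> | y_neq_x].
  by under eq_bigr do rewrite spin_mul_self; rewrite prodr_const.
have [j y_neq_x_j] : exists j, y j != x j.
  apply/existsP; rewrite -negb_forall; apply: contra y_neq_x => /forallP eq_yx.
  by apply/eqP/ffunP => j; apply/eqP.
have j_free : j \in ~: J.
  rewrite inE; apply: contra y_neq_x_j => j_in_J.
  move: x_in y_in; rewrite !inE => /forallP/(_ j); rewrite j_in_J => /eqP ->.
  by move/forallP/(_ j); rewrite j_in_J.
rewrite (bigD1 j j_free) /=.
have -> : x j = ~~ y j by move: y_neq_x_j; case: (y j); case: (x j).
by rewrite spinN mulrN spin_mul_self subrr mul0r.
Qed.

Definition cell_coef (f : pt -> R) J z S : R :=
  if S \subset ~: J then (2 ^+ #|~: J|)^-1 * \sum_(y in cell J z) f y * chi S y else 0.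

Lemma cell_fourier (f : pt -> R) J z x : x \in cell J z ->
  f x = \sum_(S : {set 'I_d} | S \subset ~: J) cell_coef f J z S * chi S x.
Proof.
move=> x_in; have pow2_neq0 : (2 : R) ^+ #|~: J| != 0 by rewrite expf_neq0 // pnatr_eq0.
transitivity ((2 ^+ #|~: J|)^-1 *
    \sum_(y in cell J z) f y * \sum_(S : {set 'I_d} | S \subset ~: J) chi S y * chi S x).
  rewrite (eq_bigr (fun y => f y * (if y == x then 2 ^+ #|~: J| else 0))); last first.
    by move=> y y_in; rewrite (sum_chi_mul_chi x_in y_in).
  rewrite (bigD1 x x_in) /= eqxx big1 ?addr0 => [|y /andP[_ /negbTE ->]]; last first.
    by rewrite mulr0.
  by rewrite mulrCA mulVf // mulr1.
under eq_bigr do rewrite mulr_sumr.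
rewrite exchange_big mulr_sumr; apply: eq_bigr => S S_free.
rewrite /cell_coef S_free -mulrA mulr_suml; congr (_ * _).
by apply: eq_bigr => y _; rewrite mulrA.
Qed.

Lemma cell_coef_eq0 (f : pt -> R) J z S k : k \in S -> k \notin J ->
  {in cell J z, forall x, f (flip k x) = f x} -> cell_coef f J z S = 0.
Proof.
move=> k_in_S k_notin_J f_even; rewrite /cell_coef; case: ifP => // _.
rewrite (sum_cell_odd k_notin_J) ?mulr0 // => x x_in.
by rewrite f_even // chi_flip // mulrN.
Qed.

Lemma ccov_coord_expansion (A : pred {set 'I_d}) (beta : {set 'I_d} -> R)
    (g : pt -> R) J w k : k \notin J ->
  {in cell J w, forall x, g x = \sum_(S : {set 'I_d} | A S) beta S * chi S x} ->
  ccov (cell J w) g (coord k) =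
  \sum_(S : {set 'I_d} | A S && (k \in S) && (S :\ k \subset J)) beta S * chi (S :\ k) w.
Proof.
move=> k_notin_J g_expansion; rewrite ccov_coord // /cmean.
have card_neq0 : (#|cell J w|%:R : R) != 0 by rewrite pnatr_eq0 -lt0n cell_card_gt0.
apply: (canLR (mulfK card_neq0)).
transitivity (\sum_(S : {set 'I_d} | A S) beta S *
    \sum_(x in cell J w) chi (if k \in S then S :\ k else k |: S) x).
  under eq_bigr => x x_in do rewrite g_expansion // mulr_suml.
  rewrite exchange_big; apply: eq_bigr => S _.
  by rewrite mulr_sumr; apply: eq_bigr => x _; rewrite -mulrA chi_mul_coord.
rewrite mulr_suml (bigID (fun S => (k \in S) && (S :\ k \subset J))) /= addrC big1 ?add0r.
  apply: eq_big => [S | S /andP[_ /andP[-> sub_J]]]; first by rewrite andbA.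
  by rewrite sum_chi_cell sub_J mulrCA mulrC.
move=> S /andP[_]; rewrite sum_chi_cell.
case: (boolP (k \in S)) => _ /=; first by move/negbTE ->; rewrite mulr0.
by rewrite subUset sub1set (negbTE k_notin_J) mulr0.
Qed.

End Cells.

Lemma setD_eq_set1 (d : nat) (J U S : {set 'I_d}) (k : 'I_d) :
  S \subset ~: J -> k \in S -> k \notin U -> S :\ k \subset J :|: U -> S :\: U = [set k].
Proof.
move=> S_free k_in_S k_notin_U S_sub; apply/setP => j; rewrite !inE.
apply/idP/eqP => [/andP[j_notin_U j_in_S] | ->]; last by rewrite k_notin_U k_in_S.
apply/eqP; apply: contraNT j_notin_U => j_neq_k.
have /(subsetP S_sub) : j \in S :\ k by rewrite in_setD1 j_neq_k.
by rewrite inE; have /(subsetP S_free) := j_in_S; rewrite inE => /negbTE ->.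
Qed.

Lemma exists_pos_lbound (R : realType) (T : finType) (m : T -> R) :
  exists2 l, 0 < l & forall p, 0 < m p -> l <= m p.
Proof.
exists (\big[Num.min/1]_(p | 0 < m p) m p); first exact: lt_bigmin.
by move=> p; exact: bigmin_le_cond.
Qed.

Section Equivalence.
Variables (R : realType) (d : nat) (f : {ffun 'I_d -> bool} -> R).
Local Notation coord := (@Pilot.Defs.coord R d).

Lemma msp_on_cell_corr_gt0 J z : msp_on_cell f J z -> 0 < cvar (cell J z) f ->
  exists2 k, k \notin J & 0 < ccorr2 (cell J z) f (coord k).
Proof.
move=> [beta [beta_free f_expansion [s [_ mem_s stair_s]]]] var_gt0.
have [k beta_k_neq0] : exists k, beta [set k] != 0.
  have nonconst : has (predC1 set0) s.
    apply/hasPn => only_set0; move: var_gt0; rewrite (cvar_const (c := beta set0)) ?ltxx //.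
    move=> x /f_expansion ->; rewrite (bigD1 set0) ?sub0set //= chi0 mulr1 big1 ?addr0 //.
    move=> S /andP[_ S_neq0]; have /negPn/eqP -> : ~~ (beta S != 0); last by rewrite mul0r.
    by rewrite -mem_s; apply: contraL S_neq0 => /only_set0.
  by have [k] := staircase_first_singleton stair_s nonconst; rewrite mem_s; exists k.
have k_notin_J : k \notin J by have := beta_free _ beta_k_neq0; rewrite sub1set inE.
exists k => //; rewrite /ccorr2 (cvar_coord R z k_notin_J) mulr1.
rewrite (ccov_coord_expansion k_notin_J f_expansion).
rewrite (eq_bigl (pred1 [set k])) => [|S]; last first.
  apply/idP/eqP => [/andP[/andP[S_free k_in_S] S_sub] | ->].
    by rewrite -(setD0 S); apply: (setD_eq_set1 (J := J)); rewrite ?inE ?setU0.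
  by rewrite beta_free // set11 setDv sub0set.
rewrite big_pred1_eq setDv chi0 mulr1.
by apply: divr_gt0 => //; rewrite lt_def sqrf_eq0 beta_k_neq0 sqr_ge0.
Qed.

Definition coord_correlated := forall J z, 0 < cvar (cell J z) f ->
  exists2 k, k \notin J & ccov (cell J z) f (coord k) != 0.

Lemma SID_coord_correlated lambda : 0 < lambda -> SID f lambda -> coord_correlated.
Proof.
move=> lambda_gt0 sid J z /sid[k k_notin_J le_lambda]; exists k => //.
by apply: contraTneq le_lambda => cov0; rewrite /ccorr2 cov0 expr0n mul0r -ltNge.
Qed.

Lemma msp_on_cell_of_correlated J z : coord_correlated -> msp_on_cell f J z.
Proof.
move=> correlated; exists (cell_coef f J z); split => [S | x | ].
- by rewrite /cell_coef; case: ifP => // _; rewrite eqxx.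
- exact: cell_fourier.
apply: msp_support_of_extendable => U [S /andP[coef_S_neq0 S_not_sub_U]].
have S_free : S \subset ~: J.
  by apply: contraNT coef_S_neq0 => S_not_free; rewrite /cell_coef (negbTE S_not_free).
apply/existsP; apply: contraNT coef_S_neq0 => /existsPn no_step.
have f_const w : w \in cell J z -> {in cell (J :|: U) w, forall x, f x = f w}.
  move=> w_in x x_in; apply: (cvar_le0_const _ x_in (cell_center _ _)).
  rewrite leNgt; apply/negP => /correlated[k].
  rewrite in_setU negb_or => /andP[k_notin_J k_notin_U].
  rewrite (ccov_coord_expansion (beta := cell_coef f J z) (A := fun S => S \subset ~: J)) //.
  - rewrite big1 ?eqxx // => S' /andP[/andP[S'_free k_in_S'] S'_sub].
    have := no_step S'; rewrite (setD_eq_set1 S'_free k_in_S' k_notin_U) // cards1 andbT.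
    by move=> /negbNE/eqP ->; rewrite mul0r.
  - by rewrite in_setU negb_or k_notin_J.
  - by move=> y /(subsetP (cell_subset U w_in)); exact: cell_fourier.
have [k k_in_S k_notin_U] := subsetPn S_not_sub_U.
have k_notin_J : k \notin J by have := subsetP S_free k k_in_S; rewrite inE.
rewrite (cell_coef_eq0 k_in_S k_notin_J) // => x x_in; apply: f_const => //.
by rewrite mem_flip_cell ?cell_center // in_setU negb_or k_notin_J.
Qed.

End Equivalence.

Theorem propositionG2 (R : realType) (d : nat)
    (f : {ffun 'I_d -> bool} -> R) :
  stable_msp f <-> exists2 lambda : R, 0 < lambda & SID f lambda.
Proof.
split => [msp_f | [lambda lambda_gt0 sid] J z].
  have [l l_gt0 l_lb] := exists_pos_lbound
    (fun p : {set 'I_d} * {ffun 'I_d -> bool} * 'I_d =>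
       ccorr2 (cell p.1.1 p.1.2) f (@Pilot.Defs.coord R d p.2)).
  exists l => // J z /(msp_on_cell_corr_gt0 (msp_f J z))[k k_notin_J corr_gt0].
  by exists k => //; exact: (l_lb (J, z, k)).
exact/msp_on_cell_of_correlated/(SID_coord_correlated lambda_gt0 sid).
Qed.
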